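(* For all integers $0\le a<t\le T-1$, \[ G_a^{\lambda\mid t+1}=G_a^{\lambda\mid t}+(\lambda\gamma)^{t-a}\,\delta'_{a,t}, \] where \[ \delta'_{a,t}=\frac{\partial L_{t+1}}{\partial h_a}+\gamma\, g(h_{t+1};\theta_t)^\top\frac{\partial h_{t+1}}{\partial h_a}-g(h_t;\theta_{t-1})^\top\frac{\partial h_t}{\partial h_a}. \]
   Context: Fix integers $d,p,T\ge1$. Hidden states $h_0,\dots,h_T\in\mathbb{R}^d$ are produced by a recurrent network $h_t=f(x_t,h_{t-1})$ with $f$ differentiable and inputs fixed; losses $L_t=\ell_t(h_t)$, $1\le t\le T$, with $\ell_t$ differentiable. For $0\le s\le\tau\le T$, $\partial h_\tau/\partial h_s\in\mathbb{R}^{d\times d}$ is the Jacobian of $h_\tau$ as a function of $h_s$ through the recursion (identity if $\tau=s$); for $s<\tau$, $\partial L_\tau/\partial h_s\in\mathbb{R}^d$ is the gradient of $L_\tau$ as a function of $h_s$; for $v\in\mathbb{R}^d$, $v^\top\partial h_\tau/\partial h_s$ means $(\partial h_\tau/\partial h_s)^\top v$. Let $g:\mathbb{R}^d\times\mathbb{R}^p\to\mathbb{R}^d$ be any map (the synthesiser), $\gamma,\lambda\in[0,1]$, and let $\theta_{-1},\theta_0,\dots,\theta_{T-1}\in\mathbb{R}^p$ be an arbitrary sequence of weight vectors. Convention $0^0=1$. The $n$-step synthetic gradient, for $k\ge0$, $n\ge1$, $k+n\le T$, is $G_k^{(n)}=\sum_{\tau=1}^{n}\gamma^{\tau-1}\frac{\partial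 L_{k+\tau}}{\partial h_k}+\gamma^n g(h_{k+n};\theta_{k+n-1})^\top\frac{\partial h_{k+n}}{\partial h_k}$, and the interim $\lambda$-weighted synthetic gradient, for $0\le k<H\le T$, is $G_k^{\lambda\mid H}=(1-\lambda)\sum_{n=1}^{H-k-1}\lambda^{n-1}G_k^{(n)}+\lambda^{H-k-1}G_k^{(H-k)}$. *)

From HB Require Import structures.
From mathcomp Require Import all_boot all_order all_algebra.
From mathcomp Require Import all_classical all_reals all_analysis.
Set Implicit Arguments. Unset Strict Implicit. Unset Printing Implicit Defensive.
Import Order.TTheory GRing.Theory Num.Theory.
Import numFieldNormedType.Exports.
Local Open Scope ring_scope.

Section Defs.
Variables (R : realType) (d p : nat).
(* f t := the map h |-> f(x_t, h) (inputs x_t fixed), for 1 <= t <= T. *)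
Variable f : nat -> 'rV[R]_d -> 'rV[R]_d.

(* flow s n x : the hidden state at time s+n as a function of h_s = x,
   i.e. f_{s+n} o ... o f_{s+1}. *)
Fixpoint flow (s n : nat) (x : 'rV[R]_d) : 'rV[R]_d :=
  match n with
  | 0 => x
  | n'.+1 => f (s + n'.+1) (flow s n' x)
  end.

(* Jacobian in the usual convention: (Jac F x) i j = d F_i / d x_j.
   MathComp-Analysis' 'J uses the row-vector convention (u *m 'J F x = 'd F x u),
   hence the transpose. *)
Definition Jac (F : 'rV[R]_d -> 'rV[R]_d) (x : 'rV[R]_d) : 'M[R]_d :=
  (jacobian F x)^T.

Definition grad (phi : 'rV[R]_d -> R) (x : 'rV[R]_d) : 'rV[R]_d :=
  \row_(j < d) ('d phi x) (delta_mx 0 j : 'rV[R]_d).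

Variable h : nat -> 'rV[R]_d.
Variable ell : nat -> 'rV[R]_d -> R.     (* ell t, L_t = ell t (h t) *)

Definition dh (tau s : nat) : 'M[R]_d := Jac (flow s (tau - s)) (h s).

Definition dL (tau s : nat) : 'rV[R]_d := grad (ell tau \o flow s (tau - s)) (h s).

Definition vJ (v : 'rV[R]_d) (tau s : nat) : 'rV[R]_d := v *m dh tau s.

Variables (g : 'rV[R]_d -> 'rV[R]_p -> 'rV[R]_d) (theta : int -> 'rV[R]_p).
Variables (gamma lambda : R).

Definition Gn (k n : nat) : 'rV[R]_d :=
  \sum_(1 <= tau < n.+1) gamma ^+ (tau - 1) *: dL (k + tau) k
  + gamma ^+ n *: vJ (g (h (k + n)) (theta ((k + n)%:Z - 1))) (k + n) k.

Definition Glam (k H : nat) : 'rV[R]_d :=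
  (1 - lambda) *: \sum_(1 <= n < H - k) lambda ^+ (n - 1) *: Gn k n
  + lambda ^+ (H - k - 1) *: Gn k (H - k).

Definition delta' (a t : nat) : 'rV[R]_d :=
  dL t.+1 a + gamma *: vJ (g (h t.+1) (theta t%:Z)) t.+1 a
  - vJ (g (h t) (theta (t%:Z - 1))) t a.

End Defs.

From HB Require Import structures.
From mathcomp Require Import all_boot all_order all_algebra.
From mathcomp Require Import all_classical all_reals all_analysis.
Import Order.TTheory GRing.Theory Num.Theory.
Import numFieldNormedType.Exports.
Local Open Scope ring_scope.

(* Both sides are built from the same finitely many vectors [dL], [vJ], so the
   identity is pure algebra.  One more step of lookahead changes the n-step
   gradient by [gamma ^+ n *: delta'], and extending the horizon of a
   lambda-weighted average by one changes it by [lambda ^+ N] times the last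
   increment of the averaged sequence; multiplying the two factors gives
   [(lambda * gamma) ^+ (t - a)]. *)

Section LambdaAverage.
Variables (R : pzRingType) (V : lmodType R) (lam : R).

Definition lambda_average (u : nat -> V) (N : nat) : V :=
  (1 - lam) *: \sum_(1 <= n < N) lam ^+ (n - 1) *: u n + lam ^+ (N - 1) *: u N.

Lemma lambda_average_recr (u : nat -> V) (N : nat) : (0 < N)%N ->
  lambda_average u N.+1 = lambda_average u N + lam ^+ N *: (u N.+1 - u N).
Proof.
case: N => // N _; rewrite /lambda_average big_nat_recr //= !subSS !subn0.
rewrite scalerDr -!addrA; congr (_ + _).
by rewrite scalerA mulrBl mul1r -exprS scalerBl scalerBr addrAC addrA.
Qed.

End LambdaAverage.

Arguments lambda_average {R V} lam u N.

Section SyntheticGradient.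
Variables (R : realType) (d p : nat) (f : nat -> 'rV[R]_d -> 'rV[R]_d).
Variables (h : nat -> 'rV[R]_d) (ell : nat -> 'rV[R]_d -> R).
Variables (g : 'rV[R]_d -> 'rV[R]_p -> 'rV[R]_d) (theta : int -> 'rV[R]_p).
Variables (gamma lambda : R).

Local Notation Gn := (Gn f h ell g theta gamma).
Local Notation Glam := (Glam f h ell g theta gamma lambda).
Local Notation delta' := (delta' f h ell g theta gamma).

Lemma Gn_recr (k n : nat) : Gn k n.+1 = Gn k n + gamma ^+ n *: delta' k (k + n).
Proof.
rewrite /Gn /delta' big_nat_recr //= subn1 /= addnS.
have -> : (k + n).+1%:Z - 1 = (k + n)%:Z :> int by rewrite -addn1 PoszD addrK.
rewrite scalerBr scalerDr scalerA -exprSr -[RHS]addrA.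
by rewrite [X in _ = _ + X]addrC subrK addrA.
Qed.

Lemma Glam_lambda_average (k H : nat) :
  Glam k H = lambda_average lambda (Gn k) (H - k).
Proof. by []. Qed.

Lemma Glam_recr (k H : nat) : (k < H)%N ->
  Glam k H.+1 = Glam k H + (lambda * gamma) ^+ (H - k) *: delta' k H.
Proof.
move=> lt_kH; rewrite !Glam_lambda_average subSn 1?ltnW //.
rewrite lambda_average_recr ?subn_gt0 // Gn_recr [Gn _ _ + _]addrC addrK.
by rewrite scalerA exprMn subnKC 1?ltnW.
Qed.

End SyntheticGradient.

Theorem lemma1 (R : realType) (d p T : nat)
  (f : nat -> 'rV[R]_d -> 'rV[R]_d) (ell : nat -> 'rV[R]_d -> R)
  (h : nat -> 'rV[R]_d)
  (g : 'rV[R]_d -> 'rV[R]_p -> 'rV[R]_d) (theta : int -> 'rV[R]_p)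
  (gamma lambda : R) :
  (0 < d)%N -> (0 < p)%N -> (1 <= T)%N ->
  (forall t, (1 <= t <= T)%N -> forall x, differentiable (f t) x) ->
  (forall t, (1 <= t <= T)%N -> forall x, differentiable (ell t) x) ->
  (forall t, (t < T)%N -> h t.+1 = f t.+1 (h t)) ->
  0 <= gamma <= 1 -> 0 <= lambda <= 1 ->
  forall a t : nat, (a < t)%N -> (t <= T - 1)%N ->
    Glam f h ell g theta gamma lambda a t.+1
    = Glam f h ell g theta gamma lambda a t
      + (lambda * gamma) ^+ (t - a) *: delta' f h ell g theta gamma a t.
Proof.
by move=> _ _ _ _ _ _ _ _ a t /Glam_recr.
Qed.
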